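(* Let $\alpha_1,\dots,\alpha_4$ be constants, $H=H(t,t^-,q,q^-,p,p^-)$ smooth, and $X=\xi(t)\partial_t+\eta(t,q,p)\partial_q+\nu(t,q,p)\partial_p$ with $\xi(t)=\alpha t+f(t)$, $\alpha$ constant and $f$ $\tau$-periodic. The delay canonical Hamiltonian equations $$\frac{\delta\tilde H}{\delta p}=\alpha_{1}\dot{q}^{+}+(\alpha_{2}+\alpha_{3})\dot{q}+\alpha_{4}\dot{q}^{-}-\frac{\partial}{\partial p}(H+H^{+})=0,\qquad \frac{\delta\tilde H}{\delta q}=-\Big(\alpha_{4}\dot{p}^{+}+(\alpha_{2}+\alpha_{3})\dot{p}+\alpha_{1}\dot{p}^{-}+\frac{\partial}{\partial q}(H+H^{+})\Big)=0,$$ considered with $t^+-t=t-t^-=\tau$, are invariant under the group generated by $X$ if and only if $$\frac{\delta\Omega}{\delta p}\Big|_{\frac{\delta\tilde H}{\delta p}=0,\ \frac{\delta\tilde H}{\delta q}=0}=0,\qquad \frac{\delta\Omega}{\delta q}\Big|_{\frac{\delta\tilde H}{\delta p}=0,\ \frac{\delta\tilde H}{\delta q}=0}=0.$$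
   Context: Constant delay $\tau>0$; $t^\pm=t\pm\tau$, $f^\pm=f(t\pm\tau)$; scalar $q,p$. $S_\pm$: forward/backward shift operators on expressions; $\xi^\pm=S_\pm(\xi)$ etc.; $H^+=S_+(H)=H(t^+,t,q^+,q,p^+,p)$. $D$: total derivative acting on variables at $t^-,t,t^+$. $\tilde H=p^{-}(\alpha_{1}\dot{q}+\alpha_{2}\dot{q}^{-})+p(\alpha_{3}\dot{q}+\alpha_{4}\dot{q}^{-})-H$. For $F$ a function of $(t,t^-,q,q^-,p,p^-,\dot q,\dot q^-,\dot p,\dot p^-)$: $\frac{\delta F}{\delta p}=\frac{\partial F}{\partial p}-D\frac{\partial F}{\partial\dot p}+S_+\Big(\frac{\partial F}{\partial p^-}-D\frac{\partial F}{\partial\dot p^-}\Big)$, $\frac{\delta F}{\delta q}=\frac{\partial F}{\partial q}-D\frac{\partial F}{\partial\dot q}+S_+\Big(\frac{\partial F}{\partial q^-}-D\frac{\partial F}{\partial\dot q^-}\Big)$. $\Omega=X(\tilde H)+\tilde HD(\xi)=\nu^{-}(\alpha_{1}\dot{q}+\alpha_{2}\dot{q}^{-})+p^{-}(\alpha_{1}D(\eta)+\alpha_{2}D(\eta^{-}))+\nu(\alpha_{3}\dot{q}+\alpha_{4}\dot{q}^{-})+p(\alpha_{3}D(\eta)+\alpha_{4}D(\eta^{-}))+(\alpha_{2}p^{-}+\alpha_{4}p)\dot{q}^{-}D(\xi-\xi^{-})-\xi H_t-\eta H_q-\nu H_p-\xi^{-}H_{t^-}-\eta^{-}H_{q^-}-\nu^{-}H_{p^-}-HD(\xi)$.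 $X$ is prolonged to all variables at $t^-,t,t^+$ and their derivatives by the standard prolongation formulas ($\partial_{\dot q}$-coefficient $D(\eta)-\dot qD(\xi)$, $\partial_{\dot p}$-coefficient $D(\nu)-\dot pD(\xi)$), shifted variables carrying shifted coefficients. Invariance of the system means that $X$ applied to each of $\frac{\delta\tilde H}{\delta p}$, $\frac{\delta\tilde H}{\delta q}$ vanishes on the solutions of the system. *)

From HB Require Import structures.
From mathcomp Require Import all_boot all_order all_algebra.
From mathcomp Require Import all_classical all_reals all_analysis.
Set Implicit Arguments. Unset Strict Implicit. Unset Printing Implicit Defensive.
Import Order.TTheory GRing.Theory Num.Theory.
Import numFieldNormedType.Exports.
Local Open Scope ring_scope.

Fixpoint Ck {R : realType} {V : normedModType R} (n : nat) (f : V -> R) : Prop :=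
  match n with
  | 0 => continuous f
  | n.+1 => (forall x, differentiable f x) /\ (forall v : V, Ck n (fun x => 'D_v f x))
  end.

Definition smooth {R : realType} {V : normedModType R} (f : V -> R) : Prop :=
  forall n, Ck n f.

Definition vec3 {R : realType} (a b c : R) : 'rV[R]_3 :=
  \row_(i < 3) nth 0 [:: a; b; c] i.
Definition vec6 {R : realType} (a b c d e f : R) : 'rV[R]_6 :=
  \row_(i < 6) nth 0 [:: a; b; c; d; e; f] i.

(*  JT j   : the time at the lattice point t + j*tau  (j = -1: t^-)    *)
(*  JQ j k : k-th derivative of q at the lattice point j               *)
(*  JP j k : k-th derivative of p at the lattice point j               *)
Inductive jvar := JT of int | JQ of int & nat | JP of int & nat.

Definition jvar_eqb (u v : jvar) : bool :=
  match u, v with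
  | JT i, JT j => i == j
  | JQ i k, JQ j l => (i == j) && (k == l)
  | JP i k, JP j l => (i == j) && (k == l)
  | _, _ => false
  end.

Section Jets.
Variable R : realType.

Definition jet := jvar -> R.
Definition jexpr := jet -> R.

Definition jdir (F : jexpr) (z w : jet) : R :=
  derive1 (fun s : R => F (fun v => z v + s * w v)) 0.

Definition jpartial (v : jvar) (F : jexpr) : jexpr :=
  fun z => jdir F z (fun u => if jvar_eqb u v then 1 else 0).

Definition Dtot_dir (z : jet) : jet :=
  fun v => match v with
           | JT _ => 1
           | JQ j k => z (JQ j k.+1)
           | JP j k => z (JP j k.+1)
           end.
Definition Dtot (F : jexpr) : jexpr := fun z => jdir F z (Dtot_dir z).

Definition shiftv (v : jvar) : jvar :=
  match v with
  | JT j => JT (j + 1)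
  | JQ j k => JQ (j + 1) k
  | JP j k => JP (j + 1) k
  end.
Definition Splus (F : jexpr) : jexpr := fun z => F (fun v => z (shiftv v)).

Definition varP (F : jexpr) : jexpr := fun z =>
  jpartial (JP 0 0) F z - Dtot (jpartial (JP 0 1) F) z
  + Splus (fun y => jpartial (JP (-1) 0) F y - Dtot (jpartial (JP (-1) 1) F) y) z.
Definition varQ (F : jexpr) : jexpr := fun z =>
  jpartial (JQ 0 0) F z - Dtot (jpartial (JQ 0 1) F) z
  + Splus (fun y => jpartial (JQ (-1) 0) F y - Dtot (jpartial (JQ (-1) 1) F) y) z.

Definition Htilde (a1 a2 a3 a4 : R) (H : 'rV[R]_6 -> R) : jexpr := fun z =>
  z (JP (-1) 0) * (a1 * z (JQ 0 1) + a2 * z (JQ (-1) 1))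
  + z (JP 0 0) * (a3 * z (JQ 0 1) + a4 * z (JQ (-1) 1))
  - H (vec6 (z (JT 0)) (z (JT (-1))) (z (JQ 0 0)) (z (JQ (-1) 0))
            (z (JP 0 0)) (z (JP (-1) 0))).

(* The generator X = xi(t) d_t + eta(t,q,p) d_q + nu(t,q,p) d_p, acting at
   every lattice point j (shifted variables carry shifted coefficients),
   prolonged to all derivatives by the standard prolongation formula
   zeta_{k+1} = D(zeta_k) - q^{(k+1)} D(xi). *)
Definition xi_at (xi : R -> R) (j : int) : jexpr := fun z => xi (z (JT j)).

Fixpoint prolQ (xi : R -> R) (eta : 'rV[R]_3 -> R) (j : int) (k : nat) : jexpr :=
  match k with
  | 0 => fun z => eta (vec3 (z (JT j)) (z (JQ j 0)) (z (JP j 0)))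
  | k'.+1 => fun z => Dtot (prolQ xi eta j k') z - z (JQ j k) * Dtot (xi_at xi j) z
  end.
Fixpoint prolP (xi : R -> R) (nu : 'rV[R]_3 -> R) (j : int) (k : nat) : jexpr :=
  match k with
  | 0 => fun z => nu (vec3 (z (JT j)) (z (JQ j 0)) (z (JP j 0)))
  | k'.+1 => fun z => Dtot (prolP xi nu j k') z - z (JP j k) * Dtot (xi_at xi j) z
  end.

Definition Xdir (xi : R -> R) (eta nu : 'rV[R]_3 -> R) (z : jet) : jet :=
  fun v => match v with
           | JT j => xi (z (JT j))
           | JQ j k => prolQ xi eta j k z
           | JP j k => prolP xi nu j k z
           end.

Definition Xop (xi : R -> R) (eta nu : 'rV[R]_3 -> R) (F : jexpr) : jexpr :=
  fun z => jdir F z (Xdir xi eta nu z).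

Definition Omega (xi : R -> R) (eta nu : 'rV[R]_3 -> R) (Ht : jexpr) : jexpr :=
  fun z => Xop xi eta nu Ht z + Ht z * Dtot (xi_at xi 0) z.

Definition on_solutions (tau : R) (Ht : jexpr) (z : jet) : Prop :=
  (forall j : int, z (JT j) = z (JT 0) + j%:~R * tau)
  /\ varP Ht z = 0 /\ varQ Ht z = 0.

Definition delay_invariant (tau : R) (xi : R -> R) (eta nu : 'rV[R]_3 -> R)
  (Ht : jexpr) : Prop :=
  (forall z, on_solutions tau Ht z -> Xop xi eta nu (varP Ht) z = 0)
  /\ (forall z, on_solutions tau Ht z -> Xop xi eta nu (varQ Ht) z = 0).

End Jets.

From HB Require Import structures.
From mathcomp Require Import all_boot all_order all_algebra.
From mathcomp Require Import all_classical all_reals all_analysis.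
From mathcomp Require Import ring.
Import Order.TTheory GRing.Theory Num.Theory.
Import numFieldNormedType.Exports.
Local Open Scope ring_scope.

(* On the lattice t^- = t - tau, t^+ = t + tau the variational derivatives of
   Omega = X(H~) + H~ D(xi) obey the identities
     dOmega/dp = X(dH~/dp) + (D xi + nu_p) dH~/dp + eta_p dH~/dq,
     dOmega/dq = X(dH~/dq) + (D xi + eta_q) dH~/dq + nu_q dH~/dp,
   so on solutions of the delay Hamiltonian equations dOmega/dp and dOmega/dq
   coincide with X(dH~/dp) and X(dH~/dq). Both identities are checked by symbolic
   differentiation on jets. Besides polynomial algebra they only use that mixed
   partials of the smooth H, eta, nu commute (Schwarz) and that, f being
   tau-periodic, xi' and xi'' take the same value at t^-, t and t^+. *)

Section Schwarz.
Variable R : realType.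

Lemma MVT_0 {g dg : R -> R} {h : R} : 0 < h ->
  (forall s : R, is_derive s (1 : R) g (dg s)) ->
  exists2 c, 0 < c < h & g h - g 0 = dg c * h.
Proof.
move=> h0 dg_g.
have cg : continuous g.
  move=> s; apply: differentiable_continuous.
  by apply/derivable1_diffP; case: (dg_g s).
have [c] := MVT h0 (fun s _ => dg_g s) (continuous_subspaceT cg).
by rewrite in_itv subr0 => c0h ->; exists c.
Qed.

Variable V : normedModType R.

Lemma is_derive_line {G : V -> R} {a b : V} {s0 : R} :
  differentiable G (s0 *: b + a) ->
  is_derive s0 1 (fun s => G (s *: b + a)) ('D_b G (s0 *: b + a)).
Proof.
move=> dG.
have quotientE : (fun h : R => h^-1 *: (((fun s => G (s *: b + a)) \o shift s0) (h *: 1)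
                                        - G (s0 *: b + a)))
    = (fun h : R => h^-1 *: ((G \o shift (s0 *: b + a)) (h *: b) - G (s0 *: b + a))).
  by apply/funext => h /=; rewrite scalerDl addrA [h *: 1]mulr1.
split; first by rewrite /derivable quotientE; exact: diff_derivable.
by rewrite /derive quotientE.
Qed.

Lemma second_difference_MVT (G : V -> R) (u v x : V) {h : R} : 0 < h ->
  (forall y, differentiable G y) -> (forall y, differentiable ('D_u G) y) ->
  exists2 y, `|y - x| <= h * (`|u| + `|v|) &
    G (h *: u + (h *: v + x)) - G (h *: u + x) - (G (h *: v + x) - G x)
    = 'D_v ('D_u G) y * h * h.
Proof.
move=> h0 dG dGu.
have [c /andP[c0 ch] Eu] :=
  @MVT_0 (fun s => G (s *: u + (h *: v + x)) - G (s *: u + x)) _ _ h0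
    (fun s => is_deriveB (is_derive_line (dG (s *: u + (h *: v + x))))
                         (is_derive_line (dG (s *: u + x)))).
have [d /andP[d0 dh] Ev] := MVT_0 h0
  (fun t => is_derive_line (dGu (t *: v + (c *: u + x)))).
exists (d *: v + (c *: u + x)).
  rewrite addrA addrK (le_trans (ler_normD _ _)) // !normrZ !gtr0_norm //.
  by rewrite mulrDr addrC lerD // ler_wpM2r // ltW.
move: Eu Ev => /=; rewrite !scale0r !add0r (addrCA (h *: v)) => -> <-.
reflexivity.
Qed.

Lemma eq_at_of_common_values {F1 F2 : V -> R} {x : V} :
  {for x, continuous F1} -> {for x, continuous F2} ->
  (forall d : R, 0 < d -> exists y1 y2, [/\ ball x d y1, ball x d y2 & F1 y1 = F2 y2]) ->
  F1 x = F2 x.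
Proof.
move=> cF1 cF2 common; apply/eqP/negPn/negP => neqF.
set e := `|F1 x - F2 x| / 2.
have e0 : 0 < e by rewrite divr_gt0 // normr_gt0 subr_eq0.
have /nbhs_ballP[d /= d0 close] :
    \forall y \near x, `|F1 x - F1 y| < e /\ `|F2 x - F2 y| < e.
  by apply: filterI; [move/cvgrPdist_lt: cF1 | move/cvgrPdist_lt: cF2]; apply.
have [y1 [y2 [/close[close1 _] /close[_ close2] F12]]] := common d d0.
move: close1 close2; rewrite /e F12; move: (F1 x) (F2 x) (F2 y2) => a b c ac bc.
have split_ab : a - b = (a - c) - (b - c) by rewrite opprB addrA subrK.
suff : `|a - b| < `|a - b| / 2 + `|a - b| / 2 by rewrite -splitr ltxx.
by rewrite {1}split_ab (le_lt_trans (ler_normB _ _)) // ltrD.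
Qed.

Lemma schwarz (G : V -> R) (u v x : V) :
  (forall y, differentiable G y) ->
  (forall y, differentiable ('D_u G) y) -> (forall y, differentiable ('D_v G) y) ->
  continuous ('D_v ('D_u G)) -> continuous ('D_u ('D_v G)) ->
  'D_v ('D_u G) x = 'D_u ('D_v G) x.
Proof.
move=> dG dGu dGv cGuv cGvu.
apply: (eq_at_of_common_values (cGuv x) (cGvu x)) => d d0.
set K := `|u| + `|v|; set h := d / (K + 1).
have K0 : 0 <= K by rewrite addr_ge0.
have h0 : 0 < h by rewrite divr_gt0 // ltr_wpDl.
have in_ball (y : V) : `|y - x| <= h * K -> ball x d y.
  move=> yx; rewrite -ball_normE /ball_ /= distrC (le_lt_trans yx) //.
  by rewrite /h mulrAC ltr_pdivrMr ?ltr_wpDl // ltr_pM2l // ltrDl.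
have [y1 y1x E1] := second_difference_MVT G u v x h0 dG dGu.
have [y2 y2x E2] := second_difference_MVT G v u x h0 dG dGv.
rewrite [`|v| + _]addrC in y2x.
exists y1, y2; split; [exact: in_ball | exact: in_ball |].
apply: (mulIf (lt0r_neq0 h0)); apply: (mulIf (lt0r_neq0 h0)).
apply: etrans (esym E1) (etrans _ E2); rewrite (addrCA (h *: v)).
by move: (G _) (G _) (G _) (G x) => a b c g; ring.
Qed.

End Schwarz.

Section SmoothFunctions.
Variables (R : realType) (V : normedModType R).
Implicit Type G : V -> R.

Lemma smooth_differentiable G x : smooth G -> differentiable G x.
Proof. by move=> sG; case: (sG 1%N) => + _; apply. Qed.

Lemma smooth_derive G v : smooth G -> smooth ('D_v G).
Proof. by move=> sG n; case: (sG n.+1) => _; apply. Qed.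

Lemma smooth_continuous G : smooth G -> continuous G.
Proof. by move=> sG; exact: (sG 0%N). Qed.

Lemma smooth_deriveC G u v : smooth G -> 'D_v ('D_u G) = 'D_u ('D_v G).
Proof.
move=> sG; apply/funext => x; apply: schwarz => y.
all: by apply: smooth_differentiable || apply: smooth_continuous;
  do ?apply: smooth_derive.
Qed.

End SmoothFunctions.

Definition coord_row {R : realType} n (i : nat) : 'rV[R]_n :=
  \row_(j < n) ((j : nat) == i)%:R.

(* Locked: unifying against an unfolded [partial] would unfold limits. *)
HB.lock Definition partial {R : realType} {n} (G : 'rV[R]_n -> R) (i : nat) :
  'rV[R]_n -> R := 'D_(coord_row n i) G.

Section CoordinateDerivatives.
Variable R : realType.

Lemma derive_row_sum n (G : 'rV[R]_n -> R) (x v : 'rV[R]_n) : differentiable G x ->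
  'D_v G x = \sum_(i < n) v 0 i * partial G i x.
Proof.
move=> dG; rewrite {1}[v]row_sum_delta deriveE // linear_sum; apply: eq_bigr => i _.
have -> : delta_mx 0 i = coord_row n i :> 'rV[R]_n by apply/rowP => j; rewrite !mxE.
by rewrite linearZ unlock deriveE.
Qed.

Lemma derive_vec6 (G : 'rV[R]_6 -> R) x (b0 b1 b2 b3 b4 b5 : R) :
  differentiable G x ->
  'D_(vec6 b0 b1 b2 b3 b4 b5) G x = b0 * partial G 0 x + b1 * partial G 1 x
    + b2 * partial G 2 x + b3 * partial G 3 x + b4 * partial G 4 x + b5 * partial G 5 x.
Proof.
by move=> dG; rewrite derive_row_sum // !big_ord_recl big_ord0 !mxE !lift0 /= addr0 !addrA.
Qed.

Lemma derive_vec3 (G : 'rV[R]_3 -> R) x (b0 b1 b2 : R) :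
  differentiable G x ->
  'D_(vec3 b0 b1 b2) G x = b0 * partial G 0 x + b1 * partial G 1 x + b2 * partial G 2 x.
Proof.
by move=> dG; rewrite derive_row_sum // !big_ord_recl big_ord0 !mxE !lift0 /= addr0 !addrA.
Qed.

Lemma derive_real (g : R -> R) (x b : R) : differentiable g x -> 'D_b g x = b * derive1 g x.
Proof.
by move=> dg; rewrite derive1E' // deriveE // -{1}[b]mulr1 -[b * 1]/(b *: 1) linearZ.
Qed.

(* Mixed second partials in a canonical index order, so that [ring] identifies them. *)
Definition partial2 {n} (G : 'rV[R]_n -> R) (i k : nat) : 'rV[R]_n -> R :=
  if (i <= k)%N then partial (partial G i) k else partial (partial G k) i.

Lemma smooth_partial n (G : 'rV[R]_n -> R) i : smooth G -> smooth (partial G i).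
Proof. by rewrite unlock; apply: smooth_derive. Qed.

Lemma partialC n (G : 'rV[R]_n -> R) i k :
  smooth G -> partial (partial G i) k = partial (partial G k) i.
Proof. by rewrite unlock; apply: smooth_deriveC. Qed.

Lemma partial2E n (G : 'rV[R]_n -> R) i k :
  smooth G -> partial2 G i k = partial (partial G i) k.
Proof. by move=> sG; rewrite /partial2; case: leqP => // _; apply: partialC. Qed.

Lemma derive1_periodic {g : R -> R} {tau : R} : (forall t, g (t + tau) = g t) ->
  forall t, derive1 g (t + tau) = derive1 g t.
Proof.
move=> gper t; rewrite /derive1.
suff -> : (fun h => h^-1 *: (g (h + (t + tau)) - g (t + tau)))
        = (fun h => h^-1 *: (g (h + t) - g t)) by [].
by apply/funext => h; rewrite addrA !gper.
Qed.

Lemma smooth_derive1 (g : R -> R) : smooth g -> smooth (derive1 g).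
Proof.
move=> sg; rewrite (_ : derive1 g = 'D_1 g); first exact: smooth_derive.
by apply/funext => t; rewrite derive1E.
Qed.

End CoordinateDerivatives.

Arguments partial2 {R n}.
Arguments derive1_periodic {R g tau}.

Section JetCalculus.
Variable R : realType.
Implicit Types (F : jexpr R) (z w : jet R).

Definition jline z w (s : R) : jet R := fun v => z v + s * w v.

Definition is_jdir F z w (d : R) := is_derive (0 : R) (1 : R) (fun s => F (jline z w s)) d.

Lemma jdirE F z w d : is_jdir F z w d -> jdir F z w = d.
Proof. by rewrite /jdir derive1E => -[_ <-]. Qed.

Lemma is_jdir_cst (c : R) z w : is_jdir (fun=> c) z w 0.
Proof. exact: is_derive_cst. Qed.

Lemma is_jdir_real (g : R -> R) v z w : differentiable g (z v) ->
  is_jdir (fun y => g (y v)) z w (w v * derive1 g (z v)).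
Proof.
move=> dg; rewrite -derive_real //.
have := @is_derive_line R R g (z v) (w v) 0; rewrite scale0r add0r => /(_ dg).
by congr is_derive; apply/funext => s; rewrite /jline addrC.
Qed.

Lemma is_jdir_coord v z w : is_jdir (fun y => y v) z w (w v).
Proof.
have did : differentiable (@id R) (z v) by apply: ex_diff.
by have := @is_jdir_real id v z w did; rewrite derive1E derive_id mulr1.
Qed.

Lemma is_jdir_add F1 F2 z w d1 d2 : is_jdir F1 z w d1 -> is_jdir F2 z w d2 ->
  is_jdir (fun y => F1 y + F2 y) z w (d1 + d2).
Proof. exact: is_deriveD. Qed.

Lemma is_jdir_opp F z w d : is_jdir F z w d -> is_jdir (fun y => - F y) z w (- d).
Proof. exact: is_deriveN. Qed.

Lemma is_jdir_mul F1 F2 z w d1 d2 : is_jdir F1 z w d1 -> is_jdir F2 z w d2 ->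
  is_jdir (fun y => F1 y * F2 y) z w (d1 * F2 z + F1 z * d2).
Proof.
move=> h1 h2.
have h : is_jdir (fun y => F1 y * F2 y) z w
    (F1 (jline z w 0) *: d2 + F2 (jline z w 0) *: d1) := is_deriveM h1 h2.
have jline0 : jline z w 0 = z by apply/funext => v; rewrite /jline mul0r addr0.
apply: (is_derive_eq h); rewrite jline0.
by rewrite -[F1 z *: d2]/(F1 z * d2) -[F2 z *: d1]/(F2 z * d1) addrC mulrC.
Qed.

Lemma is_jdir_comp_linear {n} {G : 'rV[R]_n -> R} {A : jet R -> 'rV[R]_n} {z w} :
  (forall s, A (jline z w s) = s *: A w + A z) -> differentiable G (A z) ->
  is_jdir (fun y => G (A y)) z w ('D_(A w) G (A z)).
Proof.
move=> A_lin dG; have := @is_derive_line R _ G (A z) (A w) 0.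
rewrite scale0r add0r => /(_ dG).
by congr is_derive; apply/funext => s; rewrite A_lin.
Qed.

Definition argH z := vec6 (z (JT 0)) (z (JT (-1))) (z (JQ 0 0)) (z (JQ (-1) 0))
  (z (JP 0 0)) (z (JP (-1) 0)).
Definition argH_next z := vec6 (z (JT 1)) (z (JT 0)) (z (JQ 1 0)) (z (JQ 0 0))
  (z (JP 1 0)) (z (JP 0 0)).
Definition argX (j : int) z := vec3 (z (JT j)) (z (JQ j 0)) (z (JP j 0)).

Lemma argH_jline z w s : argH (jline z w s) = s *: argH w + argH z.
Proof. by apply/rowP => -[[|[|[|[|[|[|k]]]]]] ?]; rewrite !mxE //= addrC. Qed.

Lemma argH_next_jline z w s : argH_next (jline z w s) = s *: argH_next w + argH_next z.
Proof. by apply/rowP => -[[|[|[|[|[|[|k]]]]]] ?]; rewrite !mxE //= addrC. Qed.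

Lemma argX_jline j z w s : argX j (jline z w s) = s *: argX j w + argX j z.
Proof. by apply/rowP => -[[|[|[|k]]] ?]; rewrite !mxE //= addrC. Qed.

Lemma is_jdir_argH (G : 'rV[R]_6 -> R) z w : differentiable G (argH z) ->
  is_jdir (fun y => G (argH y)) z w
    (w (JT 0) * partial G 0 (argH z) + w (JT (-1)) * partial G 1 (argH z)
     + w (JQ 0 0) * partial G 2 (argH z) + w (JQ (-1) 0) * partial G 3 (argH z)
     + w (JP 0 0) * partial G 4 (argH z) + w (JP (-1) 0) * partial G 5 (argH z)).
Proof.
by move=> dG; rewrite -derive_vec6 //; exact: is_jdir_comp_linear (argH_jline z w) dG.
Qed.

Lemma is_jdir_argH_next (G : 'rV[R]_6 -> R) z w : differentiable G (argH_next z) ->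
  is_jdir (fun y => G (argH_next y)) z w
    (w (JT 1) * partial G 0 (argH_next z) + w (JT 0) * partial G 1 (argH_next z)
     + w (JQ 1 0) * partial G 2 (argH_next z) + w (JQ 0 0) * partial G 3 (argH_next z)
     + w (JP 1 0) * partial G 4 (argH_next z) + w (JP 0 0) * partial G 5 (argH_next z)).
Proof.
by move=> dG; rewrite -derive_vec6 //; exact: is_jdir_comp_linear (argH_next_jline z w) dG.
Qed.

Lemma is_jdir_argX (G : 'rV[R]_3 -> R) j z w : differentiable G (argX j z) ->
  is_jdir (fun y => G (argX j y)) z w
    (w (JT j) * partial G 0 (argX j z) + w (JQ j 0) * partial G 1 (argX j z)
     + w (JP j 0) * partial G 2 (argX j z)).
Proof.
by move=> dG; rewrite -derive_vec3 //; exact: is_jdir_comp_linear (argX_jline j z w) dG.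
Qed.

Lemma is_jdir_partial_argH (G : 'rV[R]_6 -> R) i z w : smooth G ->
  is_jdir (fun y => partial G i (argH y)) z w
    (w (JT 0) * partial2 G i 0 (argH z) + w (JT (-1)) * partial2 G i 1 (argH z)
     + w (JQ 0 0) * partial2 G i 2 (argH z) + w (JQ (-1) 0) * partial2 G i 3 (argH z)
     + w (JP 0 0) * partial2 G i 4 (argH z) + w (JP (-1) 0) * partial2 G i 5 (argH z)).
Proof.
by move=> sG; rewrite !partial2E //; apply/is_jdir_argH/smooth_differentiable/smooth_partial.
Qed.

Lemma is_jdir_partial_argH_next (G : 'rV[R]_6 -> R) i z w : smooth G ->
  is_jdir (fun y => partial G i (argH_next y)) z w
    (w (JT 1) * partial2 G i 0 (argH_next z) + w (JT 0) * partial2 G i 1 (argH_next z)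
     + w (JQ 1 0) * partial2 G i 2 (argH_next z) + w (JQ 0 0) * partial2 G i 3 (argH_next z)
     + w (JP 1 0) * partial2 G i 4 (argH_next z) + w (JP 0 0) * partial2 G i 5 (argH_next z)).
Proof.
move=> sG; rewrite !partial2E //.
by apply/is_jdir_argH_next/smooth_differentiable/smooth_partial.
Qed.

Lemma is_jdir_partial_argX (G : 'rV[R]_3 -> R) i j z w : smooth G ->
  is_jdir (fun y => partial G i (argX j y)) z w
    (w (JT j) * partial2 G i 0 (argX j z) + w (JQ j 0) * partial2 G i 1 (argX j z)
     + w (JP j 0) * partial2 G i 2 (argX j z)).
Proof.
by move=> sG; rewrite !partial2E //; apply/is_jdir_argX/smooth_differentiable/smooth_partial.
Qed.

End JetCalculus.

Arguments argH {R}.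
Arguments argH_next {R}.
Arguments argX {R}.

Ltac solve_differentiable :=
  solve [apply: smooth_differentiable;
         do ?[apply: smooth_partial | apply: smooth_derive1]; assumption].

Ltac jdir_rule :=
  first
  [ apply: is_jdir_add | apply: is_jdir_opp | apply: is_jdir_mul
  | apply: is_jdir_cst | apply: is_jdir_coord
  | apply: is_jdir_partial_argH; assumption
  | apply: is_jdir_partial_argH_next; assumption
  | apply: is_jdir_partial_argX; assumption
  | apply: is_jdir_argH; solve_differentiable
  | apply: is_jdir_argH_next; solve_differentiable
  | apply: is_jdir_argX; solve_differentiable
  | apply: is_jdir_real; solve_differentiable ].

Ltac jdir_eval :=
  repeat match goal with |- context [jdir ?F ?z ?w] =>
    erewrite (@jdirE _ F z w); last by repeat jdir_rule
  end.

(* [ring] compares atoms up to conversion and would unfold derivatives: abstract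
   every non-polynomial subterm first. *)
Ltac abstract_atom t :=
  lazymatch goal with |- @eq ?T _ _ =>
    let s := fresh "s" in pose s := (t : T); change t with s; clearbody s
  end.

Ltac jring :=
  try rewrite /partial2 /=;
  repeat match goal with
  | |- context [partial ?G ?i ?x] => abstract_atom (partial G i x)
  | |- context [derive1 ?g ?t] => abstract_atom (derive1 g t)
  end;
  repeat match goal with
  | |- context [?G (argH ?z)] => abstract_atom (G (argH z))
  | |- context [?G (argH_next ?z)] => abstract_atom (G (argH_next z))
  | |- context [?G (argX ?j ?z)] => abstract_atom (G (argX j z))
  end;
  repeat match goal with
  | |- context [?z (JT ?j)] => abstract_atom (z (JT j))
  | |- context [?z (JQ ?j ?k)] => abstract_atom (z (JQ j k))
  | |- context [?z (JP ?j ?k)] => abstract_atom (z (JP j k))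
  end;
  ring.

Lemma argH_shift (R : realType) (z : jet R) : argH (fun v => z (shiftv v)) = argH_next z.
Proof. by []. Qed.
Lemma argX_shift0 (R : realType) (z : jet R) : argX 0 (fun v => z (shiftv v)) = argX 1 z.
Proof. by []. Qed.
Lemma argX_shiftN1 (R : realType) (z : jet R) : argX (-1) (fun v => z (shiftv v)) = argX 0 z.
Proof. by []. Qed.
(* [shiftv] yields the index [j + 1], which [simpl] leaves unnormalized. *)
Lemma int_succ0 : (0 + 1 : int) = 1. Proof. by []. Qed.
Lemma int_succN1 : (-1 + 1 : int) = 0. Proof. by []. Qed.

Ltac shift_simpl :=
  rewrite ?argH_shift ?argX_shift0 ?argX_shiftN1 /= ?int_succ0 ?int_succN1.

Section DelayHamiltonianSystem.
Variables (R : realType) (tau a1 a2 a3 a4 alpha : R) (H : 'rV[R]_6 -> R) (f : R -> R)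
  (eta nu : 'rV[R]_3 -> R).
Hypotheses (sH : smooth H) (sf : smooth f) (seta : smooth eta) (snu : smooth nu)
  (fper : forall t, f (t + tau) = f t).

Definition xi (t : R) := alpha * t + f t.
Definition Ht := Htilde a1 a2 a3 a4 H.
Definition Om := Omega xi eta nu Ht.

Lemma HtE : Ht = fun z => z (JP (-1) 0) * (a1 * z (JQ 0 1) + a2 * z (JQ (-1) 1))
  + z (JP 0 0) * (a3 * z (JQ 0 1) + a4 * z (JQ (-1) 1)) - H (argH z).
Proof. by []. Qed.

Lemma Ht_pdot : jpartial (JP 0 1) Ht = fun=> 0.
Proof. by apply/funext => z; rewrite /jpartial HtE; jdir_eval; rewrite /=; jring. Qed.

Lemma Ht_pdot_prev : jpartial (JP (-1) 1) Ht = fun=> 0.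
Proof. by apply/funext => z; rewrite /jpartial HtE; jdir_eval; rewrite /=; jring. Qed.

Lemma Ht_qdot : jpartial (JQ 0 1) Ht = fun z => a1 * z (JP (-1) 0) + a3 * z (JP 0 0).
Proof. by apply/funext => z; rewrite /jpartial HtE; jdir_eval; rewrite /=; jring. Qed.

Lemma Ht_qdot_prev : jpartial (JQ (-1) 1) Ht = fun z => a2 * z (JP (-1) 0) + a4 * z (JP 0 0).
Proof. by apply/funext => z; rewrite /jpartial HtE; jdir_eval; rewrite /=; jring. Qed.

Lemma varP_Ht : varP Ht = fun z =>
  a1 * z (JQ 1 1) + (a2 + a3) * z (JQ 0 1) + a4 * z (JQ (-1) 1)
  - (partial H 4 (argH z) + partial H 5 (argH_next z)).
Proof.
apply/funext => z; rewrite /varP Ht_pdot Ht_pdot_prev /Splus /jpartial /Dtot HtE.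
by jdir_eval; shift_simpl; jring.
Qed.

Lemma varQ_Ht : varQ Ht = fun z =>
  - (a4 * z (JP 1 1) + (a2 + a3) * z (JP 0 1) + a1 * z (JP (-1) 1)
     + partial H 2 (argH z) + partial H 3 (argH_next z)).
Proof.
apply/funext => z; rewrite /varQ Ht_qdot Ht_qdot_prev /Splus /jpartial /Dtot HtE.
by jdir_eval; shift_simpl; jring.
Qed.

Local Notation prolq j z := (partial eta 0 (argX j z) + z (JQ j 1) * partial eta 1 (argX j z)
  + z (JP j 1) * partial eta 2 (argX j z) - z (JQ j 1) * (alpha + derive1 f (z (JT j)))).
Local Notation prolp j z := (partial nu 0 (argX j z) + z (JQ j 1) * partial nu 1 (argX j z)
  + z (JP j 1) * partial nu 2 (argX j z) - z (JP j 1) * (alpha + derive1 f (z (JT j)))).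

Lemma Xdir_JT j z : Xdir xi eta nu z (JT j) = alpha * z (JT j) + f (z (JT j)).
Proof. by []. Qed.
Lemma Xdir_JQ0 j z : Xdir xi eta nu z (JQ j 0) = eta (argX j z).
Proof. by []. Qed.
Lemma Xdir_JP0 j z : Xdir xi eta nu z (JP j 0) = nu (argX j z).
Proof. by []. Qed.

Lemma Xdir_JQ1 j z : Xdir xi eta nu z (JQ j 1) = prolq j z.
Proof. by rewrite /= -/(argX j) /Dtot /xi_at /xi; jdir_eval; rewrite /=; jring. Qed.

Lemma Xdir_JP1 j z : Xdir xi eta nu z (JP j 1) = prolp j z.
Proof. by rewrite /= -/(argX j) /Dtot /xi_at /xi; jdir_eval; rewrite /=; jring. Qed.

Ltac Xdir_simpl := rewrite ?Xdir_JT ?Xdir_JQ0 ?Xdir_JP0 ?Xdir_JQ1 ?Xdir_JP1.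

Lemma OmE : Om = fun z =>
  nu (argX (-1) z) * (a1 * z (JQ 0 1) + a2 * z (JQ (-1) 1))
  + z (JP (-1) 0) * (a1 * prolq 0 z + a2 * prolq (-1) z)
  + nu (argX 0 z) * (a3 * z (JQ 0 1) + a4 * z (JQ (-1) 1))
  + z (JP 0 0) * (a3 * prolq 0 z + a4 * prolq (-1) z)
  - (xi (z (JT 0)) * partial H 0 (argH z) + xi (z (JT (-1))) * partial H 1 (argH z)
     + eta (argX 0 z) * partial H 2 (argH z) + eta (argX (-1) z) * partial H 3 (argH z)
     + nu (argX 0 z) * partial H 4 (argH z) + nu (argX (-1) z) * partial H 5 (argH z))
  + Ht z * (alpha + derive1 f (z (JT 0))).
Proof.
apply/funext => z; rewrite /Om /Omega /Xop /Dtot /xi_at /xi HtE.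
by jdir_eval; Xdir_simpl; rewrite /=; jring.
Qed.

Lemma Om_pdot : jpartial (JP 0 1) Om =
  fun z => (a1 * z (JP (-1) 0) + a3 * z (JP 0 0)) * partial eta 2 (argX 0 z).
Proof. by apply/funext => z; rewrite /jpartial OmE HtE /xi; jdir_eval; rewrite /=; jring. Qed.

Lemma Om_pdot_prev : jpartial (JP (-1) 1) Om =
  fun z => (a2 * z (JP (-1) 0) + a4 * z (JP 0 0)) * partial eta 2 (argX (-1) z).
Proof. by apply/funext => z; rewrite /jpartial OmE HtE /xi; jdir_eval; rewrite /=; jring. Qed.

Lemma Om_qdot : jpartial (JQ 0 1) Om =
  fun z => a1 * nu (argX (-1) z) + a3 * nu (argX 0 z)
    + (a1 * z (JP (-1) 0) + a3 * z (JP 0 0)) * partial eta 1 (argX 0 z).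
Proof. by apply/funext => z; rewrite /jpartial OmE HtE /xi; jdir_eval; rewrite /=; jring. Qed.

Lemma Om_qdot_prev : jpartial (JQ (-1) 1) Om =
  fun z => a2 * nu (argX (-1) z) + a4 * nu (argX 0 z)
    + (a2 * z (JP (-1) 0) + a4 * z (JP 0 0))
      * (partial eta 1 (argX (-1) z) + derive1 f (z (JT 0)) - derive1 f (z (JT (-1)))).
Proof. by apply/funext => z; rewrite /jpartial OmE HtE /xi; jdir_eval; rewrite /=; jring. Qed.

Definition on_lattice (z : jet R) := forall j : int, z (JT j) = z (JT 0) + j%:~R * tau.

Lemma lattice_periodic {g : R -> R} z : (forall t, g (t + tau) = g t) -> on_lattice z ->
  g (z (JT 1)) = g (z (JT 0)) /\ g (z (JT (-1))) = g (z (JT 0)).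
Proof.
move=> gper lat; rewrite (lat 1) (lat (-1)) (_ : 1%:~R = 1 :> R) //.
rewrite (_ : (-1)%:~R = -1 :> R) // mul1r mulN1r; split; first exact: gper.
by rewrite -[in RHS](subrK tau (z (JT 0))) gper.
Qed.

Lemma lattice_derive1 z : on_lattice z ->
  [/\ derive1 f (z (JT 1)) = derive1 f (z (JT 0)),
      derive1 f (z (JT (-1))) = derive1 f (z (JT 0)),
      derive1 (derive1 f) (z (JT 1)) = derive1 (derive1 f) (z (JT 0))
    & derive1 (derive1 f) (z (JT (-1))) = derive1 (derive1 f) (z (JT 0))].
Proof.
move=> lat; have f1per := derive1_periodic fper.
have [e1 e2] := lattice_periodic z f1per lat.
have [e3 e4] := lattice_periodic z (derive1_periodic f1per) lat.
exact: And4 e1 e2 e3 e4.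
Qed.

Lemma varP_Om z : on_lattice z ->
  varP Om z = Xop xi eta nu (varP Ht) z
    + (Dtot (xi_at xi 0) z + partial nu 2 (argX 0 z)) * varP Ht z
    + partial eta 2 (argX 0 z) * varQ Ht z.
Proof.
move=> lat; rewrite varP_Ht varQ_Ht /varP Om_pdot Om_pdot_prev /Splus /jpartial /Dtot /Xop.
rewrite OmE HtE /xi_at /xi; jdir_eval; Xdir_simpl; shift_simpl.
by have [e1 e2 e3 e4] := lattice_derive1 z lat; rewrite ?e1 ?e2 ?e3 ?e4; jring.
Qed.

Lemma varQ_Om z : on_lattice z ->
  varQ Om z = Xop xi eta nu (varQ Ht) z
    + (Dtot (xi_at xi 0) z + partial eta 1 (argX 0 z)) * varQ Ht z
    + partial nu 1 (argX 0 z) * varP Ht z.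
Proof.
move=> lat; rewrite varP_Ht varQ_Ht /varQ Om_qdot Om_qdot_prev /Splus /jpartial /Dtot /Xop.
rewrite OmE HtE /xi_at /xi; jdir_eval; Xdir_simpl; shift_simpl.
by have [e1 e2 e3 e4] := lattice_derive1 z lat; rewrite ?e1 ?e2 ?e3 ?e4; jring.
Qed.

Lemma invariance_iff :
  delay_invariant tau xi eta nu Ht <->
  ((forall z, on_solutions tau Ht z -> varP Om z = 0)
   /\ (forall z, on_solutions tau Ht z -> varQ Om z = 0)).
Proof.
have varP_sol z : on_solutions tau Ht z -> varP Om z = Xop xi eta nu (varP Ht) z.
  by case=> lat [eP eQ]; rewrite varP_Om // eP eQ !mulr0 !addr0.
have varQ_sol z : on_solutions tau Ht z -> varQ Om z = Xop xi eta nu (varQ Ht) z.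
  by case=> lat [eP eQ]; rewrite varQ_Om // eP eQ !mulr0 !addr0.
split=> -[invP invQ]; split=> z sol.
- by rewrite varP_sol //; apply: invP.
- by rewrite varQ_sol //; apply: invQ.
- by rewrite -varP_sol //; apply: invP.
- by rewrite -varQ_sol //; apply: invQ.
Qed.

End DelayHamiltonianSystem.

Theorem theorem7 (R : realType) (tau : R) (a1 a2 a3 a4 alpha : R)
  (H : 'rV[R]_6 -> R) (f : R -> R) (eta nu : 'rV[R]_3 -> R) :
  0 < tau ->
  smooth H -> smooth f -> smooth eta -> smooth nu ->
  (forall t, f (t + tau) = f t) ->
  let xi := fun t : R => alpha * t + f t in
  let Ht := Htilde a1 a2 a3 a4 H in
  delay_invariant tau xi eta nu Ht <->
  ((forall z, on_solutions tau Ht z -> varP (Omega xi eta nu Ht) z = 0)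
   /\ (forall z, on_solutions tau Ht z -> varQ (Omega xi eta nu Ht) z = 0)).
Proof.
move=> _ sH sf seta snu fper xi Ht.
exact: (@invariance_iff R tau a1 a2 a3 a4 alpha H f eta nu sH sf seta snu fper).
Qed.
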